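(* Let $X$ be a connected, locally path connected space and $H\le\pi_1(X,x_0)$. If $X$ is homotopically Hausdorff relative to $H$, then $H$ is a closed subgroup of $\pi_1^{wh}(X,x_0)$.
   Context: $\pi_1^{wh}(X,x_0)$ is $\pi_1(X,x_0)$ with the whisker topology, having as basis the sets $[\alpha]\,i_*\pi_1(U,x_0)$ for $[\alpha]\in\pi_1(X,x_0)$ and $U$ an open neighborhood of $x_0$. $X$ is homotopically Hausdorff relative to $H$ if for every $g\in\pi_1(X,x_0)\setminus H$ and every path $\alpha$ from $x_0$ there is an open neighborhood $U$ of $\alpha(1)$ such that no loop $\gamma:(I,\partial I)\to(U,\alpha(1))$ satisfies $[\alpha*\gamma*\alpha^{-1}]\in Hg$. *)

From Stdlib Require Import Reals.
Open Scope R_scope.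

Record Topology (X : Type) := {
  is_open : (X -> Prop) -> Prop;
  open_full : is_open (fun _ => True);
  open_inter : forall U V, is_open U -> is_open V -> is_open (fun x => U x /\ V x);
  open_union : forall F : (X -> Prop) -> Prop,
      (forall U, F U -> is_open U) -> is_open (fun x => exists U, F U /\ U x)
}.
Arguments is_open {X} t _ : rename.

Definition inI (t : R) : Prop := 0 <= t <= 1.

Section Paths.
Context {X : Type} (T : Topology X).

(** A path is a map R -> X whose restriction to I is continuous (values
    outside I are irrelevant). *)
Definition is_path (p : R -> X) : Prop :=
  forall U, is_open T U -> forall t, inI t -> U (p t) ->
    exists d, 0 < d /\ forall s, inI s -> Rabs (s - t) < d -> U (p s).

Definition cont2 (F : R -> R -> X) : Prop :=
  forall U, is_open T U -> forall s t, inI s -> inI t -> U (F s t) ->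
    exists d, 0 < d /\ forall s' t', inI s' -> inI t' ->
      Rabs (s' - s) < d -> Rabs (t' - t) < d -> U (F s' t').

Definition path_homotopic (a b : R -> X) : Prop :=
  exists F : R -> R -> X, cont2 F /\
    (forall s, inI s -> F s 0 = a s) /\
    (forall s, inI s -> F s 1 = b s) /\
    (forall t, inI t -> F 0 t = a 0) /\
    (forall t, inI t -> F 1 t = a 1).

Definition is_loop (p : R -> X) (x : X) : Prop :=
  is_path p /\ p 0 = x /\ p 1 = x.

Definition is_loop_in (U : X -> Prop) (p : R -> X) (x : X) : Prop :=
  is_loop p x /\ forall s, inI s -> U (p s).

Definition concat (a b : R -> X) : R -> X :=
  fun s => if Rle_dec s (1/2) then a (2 * s) else b (2 * s - 1).

Definition rev (a : R -> X) : R -> X := fun s => a (1 - s).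

Definition connected_space : Prop :=
  forall U, is_open T U -> is_open T (fun x => ~ U x) ->
    (forall x, U x) \/ (forall x, ~ U x).

Definition path_connected_set (V : X -> Prop) : Prop :=
  forall a b, V a -> V b -> exists p, is_path p /\ p 0 = a /\ p 1 = b /\
    forall s, inI s -> V (p s).

Definition locally_path_connected : Prop :=
  forall x U, is_open T U -> U x ->
    exists V, is_open T V /\ V x /\ (forall y, V y -> U y) /\ path_connected_set V.

(** A subgroup H of pi_1(X,x0), represented by the set of loops whose
    classes lie in H (so H is saturated under path homotopy). *)
Definition is_pi1_subgroup (x0 : X) (H : (R -> X) -> Prop) : Prop :=
  (forall h, H h -> is_loop h x0) /\
  (forall a b, H a -> is_loop b x0 -> path_homotopic a b -> H b) /\
  H (fun _ => x0) /\
  (forall a b, H a -> H b -> H (concat a b)) /\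
  (forall a, H a -> H (rev a)).

Definition homotopically_hausdorff_rel (x0 : X) (H : (R -> X) -> Prop) : Prop :=
  forall g, is_loop g x0 -> ~ H g ->
  forall a, is_path a -> a 0 = x0 ->
    exists U, is_open T U /\ U (a 1) /\
      forall c, is_loop_in U c (a 1) ->
        ~ (exists h, H h /\
             path_homotopic (concat (concat a c) (rev a)) (concat h g)).

(** H is closed in pi_1^{wh}(X,x0): every class outside H has a basic
    neighbourhood [a] i_* pi_1(U,x0) (U open, x0 in U) disjoint from H. *)
Definition whisker_closed (x0 : X) (H : (R -> X) -> Prop) : Prop :=
  forall g, is_loop g x0 -> ~ H g ->
    exists a U, is_loop a x0 /\ is_open T U /\ U x0 /\
      (exists c, is_loop_in U c x0 /\ path_homotopic g (concat a c)) /\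
      (forall c, is_loop_in U c x0 -> ~ H (concat a c)).

End Paths.

(* Let [g] be a loop at [x0] outside [H]. Then [g^-1] is outside [H] too, so
   relative homotopic Hausdorffness, applied to [g^-1] along the path [g]
   itself, yields an open [U] around [x0] such that no [g c g^-1], with [c] a
   loop in [U], lies in [H g^-1]. But if [g c] were in [H], then
   [g c g^-1 = (g c) g^-1] would lie in [H g^-1]. Hence the basic whisker
   neighbourhood [g i_* pi_1(U, x0)] of [g] misses [H]. *)
From Stdlib Require Import Reals.
From Stdlib Require Import Lra Psatz FunctionalExtensionality.
Open Scope R_scope.

Section PathAlgebra.
Context {X : Type} (T : Topology X).

Lemma rev_involutive (a : R -> X) : rev (rev a) = a.
Proof.
  apply functional_extensionality; intro s; unfold rev; f_equal; ring.
Qed.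

Lemma is_path_const (x : X) : is_path T (fun _ => x).
Proof. intros U _ t _ Hx; exists 1; split; [lra | auto]. Qed.

Lemma is_loop_in_const (U : X -> Prop) (x : X) :
  U x -> is_loop_in T U (fun _ => x) x.
Proof. intros Hx; repeat split; auto using is_path_const. Qed.

Lemma is_path_rev (p : R -> X) : is_path T p -> is_path T (rev p).
Proof.
  intros Hp U HU t Ht HUt; unfold rev in *.
  assert (Ht' : inI (1 - t)) by (unfold inI in *; lra).
  destruct (Hp U HU (1 - t) Ht' HUt) as [d [Hd Hnear]].
  exists d; split; auto; intros s Hs Hst; apply Hnear.
  - unfold inI in *; lra.
  - replace (1 - s - (1 - t)) with (- (s - t)) by ring; rewrite Rabs_Ropp; auto.
Qed.

Lemma is_loop_rev (p : R -> X) (x : X) : is_loop T p x -> is_loop T (rev p) x.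
Proof.
  intros [Hp [H0 H1]]; split; [now apply is_path_rev |].
  unfold rev; rewrite Rminus_0_r, Rminus_diag; auto.
Qed.

Lemma is_path_concat (a b : R -> X) :
  is_path T a -> is_path T b -> a 1 = b 0 -> is_path T (concat a b).
Proof.
  intros Ha Hb Hab U HU t Ht HUt; unfold concat in *.
  destruct (total_order_T t (1/2)) as [[Hlt | Heq] | Hgt].
  - destruct (Rle_dec t (1/2)); [| lra].
    assert (Ht2 : inI (2 * t)) by (unfold inI in *; lra).
    destruct (Ha U HU _ Ht2 HUt) as [d [Hd Hnear]].
    exists (Rmin (d/2) (1/2 - t)); split; [apply Rmin_pos; lra |].
    intros s Hs Hst.
    pose proof (Rmin_l (d/2) (1/2 - t)); pose proof (Rmin_r (d/2) (1/2 - t)).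
    destruct (Rabs_def2 _ _ Hst).
    destruct (Rle_dec s (1/2)); [| lra].
    apply Hnear; [unfold inI in *; lra | apply Rabs_def1; lra].
  - subst t; destruct (Rle_dec (1/2) (1/2)); [| lra].
    replace (2 * (1/2)) with 1 in HUt by field.
    assert (I1 : inI 1) by (unfold inI; lra).
    assert (I0 : inI 0) by (unfold inI; lra).
    destruct (Ha U HU 1 I1 HUt) as [d1 [Hd1 Hnear1]].
    rewrite Hab in HUt.
    destruct (Hb U HU 0 I0 HUt) as [d2 [Hd2 Hnear2]].
    exists (Rmin d1 d2 / 2); split; [pose proof (Rmin_pos _ _ Hd1 Hd2); lra |].
    intros s Hs Hst.
    pose proof (Rmin_l d1 d2); pose proof (Rmin_r d1 d2).
    destruct (Rabs_def2 _ _ Hst).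
    destruct (Rle_dec s (1/2)).
    + apply Hnear1; [unfold inI in *; lra | apply Rabs_def1; lra].
    + apply Hnear2; [unfold inI in *; lra | apply Rabs_def1; lra].
  - destruct (Rle_dec t (1/2)); [lra |].
    assert (Ht2 : inI (2 * t - 1)) by (unfold inI in *; lra).
    destruct (Hb U HU _ Ht2 HUt) as [d [Hd Hnear]].
    exists (Rmin (d/2) (t - 1/2)); split; [apply Rmin_pos; lra |].
    intros s Hs Hst.
    pose proof (Rmin_l (d/2) (t - 1/2)); pose proof (Rmin_r (d/2) (t - 1/2)).
    destruct (Rabs_def2 _ _ Hst).
    destruct (Rle_dec s (1/2)); [lra |].
    apply Hnear; [unfold inI in *; lra | apply Rabs_def1; lra].
Qed.

Lemma cont2_path_comp (p : R -> X) (f : R -> R -> R) :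
  is_path T p ->
  (forall s t, inI s -> inI t -> inI (f s t)) ->
  (forall s t e, inI s -> inI t -> 0 < e -> exists d, 0 < d /\
     forall s' t', inI s' -> inI t' -> Rabs (s' - s) < d -> Rabs (t' - t) < d ->
       Rabs (f s' t' - f s t) < e) ->
  cont2 T (fun s t => p (f s t)).
Proof.
  intros Hp Hf Hcont U HU s t Hs Ht HUp.
  destruct (Hp U HU (f s t) (Hf s t Hs Ht) HUp) as [e [He Hnear]].
  destruct (Hcont s t e Hs Ht He) as [d [Hd Hd']].
  exists d; split; auto.
Qed.

Lemma path_homotopic_refl (p : R -> X) : is_path T p -> path_homotopic T p p.
Proof.
  intros Hp; exists (fun s t => p ((fun s _ => s) s t)); repeat split; auto.
  apply cont2_path_comp; auto.
  intros s t e _ _ He; exists e; split; auto.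
Qed.

End PathAlgebra.

Definition stretch (s t : R) : R := Rmin ((1 + t) * s) 1.

Lemma stretch_inI (s t : R) : inI s -> inI t -> inI (stretch s t).
Proof.
  unfold inI, stretch, Rmin; intros Hs Ht; destruct (Rle_dec _ 1); nra.
Qed.

Lemma stretch_lipschitz (s t s' t' d : R) :
  inI s -> inI t -> inI s' -> inI t' ->
  Rabs (s' - s) < d -> Rabs (t' - t) < d ->
  Rabs (stretch s' t' - stretch s t) < 3 * d.
Proof.
  unfold inI, stretch; intros [] [] [] [] Hs Ht.
  destruct (Rabs_def2 _ _ Hs); destruct (Rabs_def2 _ _ Ht).
  assert (-(3 * d) < (1 + t') * s' - (1 + t) * s < 3 * d) by (split; nra).
  unfold Rmin; destruct (Rle_dec _ 1); destruct (Rle_dec _ 1);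
  apply Rabs_def1; lra.
Qed.

(* At time [t] the homotopy runs [p] at speed [1 + t] and then waits at [p 1]. *)
Lemma path_homotopic_concat_const {X : Type} (T : Topology X) (p : R -> X) :
  is_path T p -> path_homotopic T p (concat p (fun _ => p 1)).
Proof.
  intros Hp; exists (fun s t => p (stretch s t)); split.
  { apply cont2_path_comp; auto using stretch_inI.
    intros s t e Hs Ht He; exists (e / 3); split; [lra |].
    intros s' t' Hs' Ht' H1 H2.
    replace e with (3 * (e / 3)) by field; now apply stretch_lipschitz. }
  repeat split; intros s Hs; unfold concat, stretch, Rmin, inI in *;
    repeat destruct (Rle_dec _ _); f_equal; lra.
Qed.

Section Subgroup.
Context {X : Type} (T : Topology X) (x0 : X) (H : (R -> X) -> Prop).
Hypothesis HH : is_pi1_subgroup T x0 H.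

Lemma pi1_subgroup_rev_notin (g : R -> X) : ~ H g -> ~ H (rev g).
Proof.
  intros Hg Hrg; apply Hg; rewrite <- (rev_involutive g).
  now apply HH.
Qed.

Lemma pi1_subgroup_conj_in_coset (g c : R -> X) :
  is_loop T g x0 -> H (concat g c) ->
  exists h, H h /\ path_homotopic T (concat (concat g c) (rev g)) (concat h (rev g)).
Proof.
  intros Hg Hgc; exists (concat g c); split; auto.
  destruct HH as [Hloop _]; destruct (Hloop _ Hgc) as [Hgcp [_ Hgc1]].
  destruct (is_loop_rev T g x0 Hg) as [Hrg [Hrg0 _]].
  apply path_homotopic_refl, is_path_concat; auto; congruence.
Qed.

End Subgroup.

Theorem proposition3p9 (X : Type) (T : Topology X) (x0 : X)
  (H : (R -> X) -> Prop) :
  connected_space T -> locally_path_connected T ->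
  is_pi1_subgroup T x0 H ->
  homotopically_hausdorff_rel T x0 H ->
  whisker_closed T x0 H.
Proof.
  intros _ _ HH Hhaus g Hg HgH.
  pose proof Hg as [Hgp [Hg0 Hg1]].
  destruct (Hhaus (rev g) (is_loop_rev T g x0 Hg)
              (pi1_subgroup_rev_notin T x0 H HH g HgH) g Hgp Hg0)
    as [U [HU [HUx0 HUsep]]].
  rewrite Hg1 in HUx0, HUsep.
  exists g, U; repeat split; auto.
  - exists (fun _ => x0); split; [now apply is_loop_in_const |].
    rewrite <- Hg1; now apply path_homotopic_concat_const.
  - intros c Hc Hgc; apply (HUsep c Hc).
    now apply (pi1_subgroup_conj_in_coset T x0 H HH).
Qed.
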